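(* Consider the family of single-server discrete-time queues described in the context, indexed by $\epsilon\in(0,\mu)$. Let $\bar q^{(\epsilon)}$ be a random variable distributed according to the stationary distribution of $\{q^{(\epsilon)}(t)\}_{t\ge0}$. Let $Z^{(\epsilon)}$ be an exponential random variable with rate $\frac{2}{(\sigma_a^{(\epsilon)})^2+\sigma_s^2}$, i.e. with mean $\frac{(\sigma_a^{(\epsilon)})^2+\sigma_s^2}{2}$. Then there exists a constant $K<\infty$, independent of $\epsilon$, such that for every $\epsilon\in(0,\mu)$, $$d_W\big(\epsilon\,\bar q^{(\epsilon)},\,Z^{(\epsilon)}\big)\le K\epsilon .$$
   Context: Wasserstein distance: for real-valued random variables $X,Y$, $d_W(X,Y)=\sup_{h\in \mathrm{Lip}(1)}|\mathbb E[h(X)]-\mathbb E[h(Y)]|$, where $\mathrm{Lip}(1)$ is the set of functions $h:\mathbb R\to\mathbb R$ with $|h(x)-h(y)|\le|x-y|$. Single-server queue: time is slotted. The queue length evolves as $q(t+1)=q(t)+a(t)-s(t)+u(t)$, where $u(t)=\max(s(t)-a(t)-q(t),0)$ is the unused service, and $q(0)$ is a nonnegative integer. The arrivals $\{a(t)\}_t$ are i.i.d. nonnegative integer-valued, the services $\{s(t)\}_t$ are i.i.d. nonnegative integer-valued, and the arrival and service sequences are independent of each other and of the past queue lengths. The service law is fixed with mean $\mu>0$ and variance $\sigma_s^2$. For each $\epsilon\in(0,\mu)$ the arrival law (denoted $a^{(\epsilon)}(t)$) has mean $\lambda^{(\epsilon)}=\mu-\epsilon$ and variance $(\sigma_a^{(\epsilon)})^2$.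 There are constants $A_{max},S_{max}<\infty$ independent of $\epsilon$ with $a^{(\epsilon)}(t)\le A_{max}$ and $s(t)\le S_{max}$ almost surely. There is a constant $c_0>0$ with $(\sigma_a^{(\epsilon)})^2+\sigma_s^2\ge c_0$ for all $\epsilon$. For each $\epsilon$ the Markov chain $\{q^{(\epsilon)}(t)\}$ is assumed to be positive recurrent with a stationary distribution. *)

From Stdlib Require Export Reals Lra.
Open Scope R_scope.

Definition bounded_pmf (p : nat -> R) (M : nat) : Prop :=
  (forall n, 0 <= p n) /\ (forall n, (M < n)%nat -> p n = 0) /\
  sum_f_R0 p M = 1.

Definition pmf_mean (p : nat -> R) (M : nat) : R :=
  sum_f_R0 (fun n => INR n * p n) M.
Definition pmf_var (p : nat -> R) (M : nat) : R :=
  sum_f_R0 (fun n => (INR n - pmf_mean p M) ^ 2 * p n) M.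

(* One-step transition probability of q(t+1) = max(q(t)+a(t)-s(t), 0)
   (nat truncated subtraction), arrivals ~ pa on {0..A}, services ~ ps
   on {0..S}, independent. *)
Definition trans (pa : nat -> R) (A : nat) (ps : nat -> R) (S : nat)
  (i j : nat) : R :=
  sum_f_R0 (fun a => sum_f_R0 (fun s =>
     pa a * ps s * (if Nat.eqb (i + a - s)%nat j then 1 else 0)) S) A.

Definition stationary (pa : nat -> R) (A : nat) (ps : nat -> R) (S : nat)
  (pi : nat -> R) : Prop :=
  (forall n, 0 <= pi n) /\ infinite_sum pi 1 /\
  forall j, infinite_sum (fun i => pi i * trans pa A ps S i j) (pi j).

Definition Lip1 (h : R -> R) : Prop :=
  forall x y, Rabs (h x - h y) <= Rabs (x - y).

Definition improper_int0 (f : R -> R) (l : R) : Prop :=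
  (forall b, 0 <= b -> inhabited (Riemann_integrable f 0 b)) /\
  forall eps, 0 < eps -> exists B, forall b (pr : Riemann_integrable f 0 b),
      B <= b -> Rabs (RiemannInt pr - l) < eps.

Definition exp_density (theta x : R) : R := theta * exp (- (theta * x)).

From Stdlib Require Import Reals Lra Lia.
From Coquelicot Require Import Coquelicot.
Open Scope R_scope.

(* Stein's method for the exponential law, combined with a drift argument for the queue.
   For 1-Lipschitz [h] the Stein equation [g' / th - g = h - E h(Z)] has a solution with
   [g 0 = 0], [|g'| <= 1] and [g'] [2 th]-Lipschitz. The discrete primitive
   [Phi n = sum_(k < n) g (eps k)] grows quadratically, and the stationary queue has a finite
   second moment (from the drift of a truncated cube), so [Phi] has zero stationary drift.
   Expanding that drift to second order, [E(a - s) = - eps] and [E(a - s)^2 = sigma^2 + eps^2]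
   with [th = 2 / sigma^2] turn it into [eps (E h(eps q) - E h(Z)) + E[g(eps q) u] + O(eps^2)],
   and [E[g(eps q) u] = O(eps^2)] since the unused service [u] has mean [eps] and vanishes
   when [q >= smax]. *)

(** * Stein equation for the exponential law *)

Lemma Lip1_continuous (h : R -> R) : Lip1 h -> forall x, continuous h x.
Proof.
  intros Hh x. apply filterlim_locally. intros eps.
  exists eps. intros y Hy. exact (Rle_lt_trans _ _ _ (Hh y x) Hy).
Qed.

Lemma Lip1_growth (h : R -> R) x : Lip1 h -> 0 <= x -> Rabs (h x) <= Rabs (h 0) + x.
Proof.
  intros Hh Hx. pose proof (Hh x 0) as H. rewrite Rminus_0_r, (Rabs_right x) in H by lra.
  pose proof (Rabs_triang_inv (h x) (h 0)). lra.
Qed.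

Lemma exp_ge_sqr_div4 y : 0 <= y -> y * y / 4 <= exp y.
Proof.
  intros Hy. replace y with (y/2 + y/2) at 3 by field. rewrite exp_plus.
  pose proof (exp_ineq1_le (y/2)). nra.
Qed.

Lemma exp_linear_decay th a eps : 0 < th -> 0 <= a -> 0 < eps ->
  exists X, 0 <= X /\ forall x, X <= x -> exp (- (th * x)) * (a + x) < eps.
Proof.
  intros Hth Ha He.
  set (X := Rmax 1 (Rmax a (16 / (th * th * eps)))).
  assert (HX1 : 1 <= X) by apply Rmax_l.
  assert (HXa : a <= X) by (eapply Rle_trans; [apply Rmax_l | apply Rmax_r]).
  assert (HX16 : 16 / (th * th * eps) <= X) by (eapply Rle_trans; [apply Rmax_r | apply Rmax_r]).
  exists X. split; [lra|]. intros x Hx.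
  assert (Hthe : 0 < th * th * eps) by (apply Rmult_lt_0_compat; nra).
  assert (H16 : 16 <= x * (th * th * eps)).
  { apply (Rmult_le_compat_r (th * th * eps)) in HX16; [|lra].
    unfold Rdiv in HX16. rewrite Rmult_assoc, Rinv_l in HX16; nra. }
  pose proof (exp_ge_sqr_div4 (th * x) ltac:(nra)).
  rewrite exp_Ropp. apply (Rmult_lt_reg_r (exp (th * x))); [apply exp_pos|].
  replace (/ exp (th * x) * (a + x) * exp (th * x)) with (a + x)
    by (field; pose proof (exp_pos (th * x)); lra).
  nra.
Qed.

Definition exp_weighted (h : R -> R) (th y : R) : R := h y * exp_density th y.

Definition exp_partial_int (h : R -> R) (th x : R) : R := RInt (exp_weighted h th) 0 x.

Definition exp_int_limit (h : R -> R) (th c : R) : Prop :=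
  forall eps, 0 < eps -> exists B, forall x, B <= x -> Rabs (exp_partial_int h th x - c) < eps.

Lemma exp_weighted_continuous h th : Lip1 h -> forall x, continuous (exp_weighted h th) x.
Proof.
  intros Hh x. apply (continuous_mult h (fun y => th * exp (- (th * y)))).
  - apply Lip1_continuous; auto.
  - apply (ex_derive_continuous (fun y => th * exp (- (th * y)))). auto_derive. auto.
Qed.

Lemma ex_RInt_exp_weighted h th : Lip1 h -> forall a b, ex_RInt (exp_weighted h th) a b.
Proof.
  intros Hh a b. apply (@ex_RInt_continuous R_CompleteNormedModule).
  intros; apply exp_weighted_continuous; auto.
Qed.

Lemma is_derive_exp_partial_int h th : Lip1 h ->
  forall x, is_derive (exp_partial_int h th) x (exp_weighted h th x).
Proof.
  intros Hh x. apply (is_derive_RInt (exp_weighted h th) _ 0).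
  - apply filter_forall. intros b. apply (@RInt_correct R_CompleteNormedModule).
    apply ex_RInt_exp_weighted; auto.
  - apply exp_weighted_continuous; auto.
Qed.

Lemma Derive_exp_partial_int h th x : Lip1 h ->
  Derive (exp_partial_int h th) x = exp_weighted h th x.
Proof. intros Hh. apply is_derive_unique, is_derive_exp_partial_int; auto. Qed.

(* [(a + x) th e^(-th x)] has the primitive [-(a + x + 1/th) e^(-th x)]. *)
Lemma RInt_linear_exp_density a th b b' : 0 < th ->
  RInt (fun x => (a + x) * exp_density th x) b b'
  = (a + b + 1/th) * exp (- (th * b)) - (a + b' + 1/th) * exp (- (th * b')).
Proof.
  intros Hth. apply is_RInt_unique.
  assert (H := is_RInt_derive (fun x => - ((a + x + 1/th) * exp (- (th * x))))
                 (fun x => (a + x) * exp_density th x) b b').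
  unfold minus, plus, opp in H; simpl in H.
  replace ((a + b + 1/th) * exp (- (th * b)) - (a + b' + 1/th) * exp (- (th * b')))
    with (- ((a + b' + 1/th) * exp (- (th * b'))) + - - ((a + b + 1/th) * exp (- (th * b))))
    by ring.
  apply H; intros x _; unfold exp_density.
  - auto_derive; auto. field. lra.
  - apply (ex_derive_continuous (fun x => (a + x) * (th * exp (- (th * x))))).
    auto_derive. auto.
Qed.

Lemma exp_partial_int_tail h th b b' : Lip1 h -> 0 < th -> 0 <= b <= b' ->
  Rabs (exp_partial_int h th b' - exp_partial_int h th b)
  <= exp (- (th * b)) * (Rabs (h 0) + 1/th + b).
Proof.
  intros Hh Hth Hb. unfold exp_partial_int.
  rewrite <- (RInt_Chasles (exp_weighted h th) 0 b b') by (apply ex_RInt_exp_weighted; auto).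
  unfold plus; simpl.
  rewrite (Rplus_comm (RInt (exp_weighted h th) 0 b)), Rplus_minus_r.
  eapply Rle_trans; [apply abs_RInt_le; [lra | apply ex_RInt_exp_weighted; auto]|].
  eapply Rle_trans.
  { apply (RInt_le _ (fun x => (Rabs (h 0) + x) * exp_density th x)).
    - lra.
    - apply (@ex_RInt_continuous R_CompleteNormedModule). intros.
      apply (continuous_comp (exp_weighted h th) Rabs).
      + apply exp_weighted_continuous; auto.
      + apply continuous_Rabs.
    - apply (@ex_RInt_continuous R_CompleteNormedModule). intros.
      apply (ex_derive_continuous (fun x => (Rabs (h 0) + x) * exp_density th x)).
      unfold exp_density. auto_derive. auto.
    - intros x Hx. unfold exp_weighted, exp_density. rewrite Rabs_mult.
      pose proof (exp_pos (- (th * x))).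
      rewrite (Rabs_right (th * _)) by nra.
      apply Rmult_le_compat_r; [nra|]. apply Lip1_growth; auto; lra. }
  rewrite RInt_linear_exp_density by auto.
  pose proof (exp_pos (- (th * b'))). pose proof (Rabs_pos (h 0)).
  assert (0 < 1/th) by (apply Rdiv_lt_0_compat; lra). nra.
Qed.

Lemma exp_int_limit_exists h th : Lip1 h -> 0 < th -> exists c, exp_int_limit h th c.
Proof.
  intros Hh Hth.
  set (a := Rabs (h 0) + 1/th).
  assert (Ha : 0 <= a).
  { unfold a. pose proof (Rabs_pos (h 0)). assert (0 < 1/th) by (apply Rdiv_lt_0_compat; lra). lra. }
  assert (Htail := exp_partial_int_tail h th). fold a in Htail.
  assert (HC : Cauchy_crit (fun n => exp_partial_int h th (INR n))).
  { intros eps He. destruct (exp_linear_decay th a eps Hth Ha He) as [X [HX0 HX]].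
    destruct (INR_archimed 1 X ltac:(lra)) as [N HN]. exists N. intros n m Hn Hm. unfold Rdist.
    assert (Hgen : forall p q, (N <= p <= q)%nat ->
      Rabs (exp_partial_int h th (INR q) - exp_partial_int h th (INR p)) < eps).
    { intros p q Hpq.
      eapply Rle_lt_trans; [apply Htail; auto; split; [apply pos_INR | apply le_INR; lia]|].
      apply HX. pose proof (le_INR _ _ (proj1 Hpq)). lra. }
    destruct (Nat.le_ge_cases n m).
    - rewrite Rabs_minus_sym. apply Hgen. lia.
    - apply Hgen. lia. }
  destruct (Rcomplete.R_complete _ HC) as [c Hc].
  exists c. intros eps He.
  destruct (exp_linear_decay th a (eps/2) Hth Ha ltac:(lra)) as [X [HX0 HX]].
  destruct (Hc (eps/2) ltac:(lra)) as [N HN].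
  exists X. intros b Hb.
  destruct (INR_archimed 1 b ltac:(lra)) as [n0 Hn0].
  specialize (HN (n0 + N)%nat ltac:(lia)). unfold Rdist in HN.
  assert (b <= INR (n0 + N)) by (rewrite plus_INR; pose proof (pos_INR N); lra).
  pose proof (Htail b (INR (n0 + N)) Hh Hth ltac:(lra)) as H1. specialize (HX b Hb).
  pose proof (Rabs_triang (exp_partial_int h th b - exp_partial_int h th (INR (n0 + N)))
                          (exp_partial_int h th (INR (n0 + N)) - c)) as H2.
  rewrite Rabs_minus_sym in H1.
  replace (exp_partial_int h th b - exp_partial_int h th (INR (n0 + N))
           + (exp_partial_int h th (INR (n0 + N)) - c))
    with (exp_partial_int h th b - c) in H2 by ring.
  lra.
Qed.

Lemma improper_int0_exp_int_limit h th c : Lip1 h -> exp_int_limit h th c ->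
  improper_int0 (fun x => h x * exp_density th x) c.
Proof.
  intros Hh Hc. split.
  - intros b Hb. constructor. apply continuity_implies_RiemannInt; auto.
    intros x _. apply continuity_pt_filterlim, (exp_weighted_continuous h th Hh).
  - intros eps He. destruct (Hc eps He) as [B HB]. exists B. intros b pr Hb.
    rewrite <- RInt_Reals. apply HB; auto.
Qed.

(* Variation of constants for [g' / th - g = h - c], [g 0 = 0]. *)
Definition stein_exp (h : R -> R) (th c x : R) : R :=
  exp (th * x) * (exp_partial_int h th x - c) + c.

Definition stein_exp_deriv (h : R -> R) (th c x : R) : R :=
  th * (exp (th * x) * (exp_partial_int h th x - c) + h x).

(* For [c] the full integral, [stein_comparison h th c x0 s x] is
   [int_x^oo (l - h)(y) th e^(-th y) dy] with [l y = h x0 + s (y - x0)], written without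
   improper integrals. *)
Definition stein_comparison (h : R -> R) (th c x0 s x : R) : R :=
  exp_partial_int h th x - c + exp (- (th * x)) * (h x0 + s * (x - x0) + s / th).

Lemma is_derive_stein_comparison h th c x0 s x : Lip1 h -> 0 < th ->
  is_derive (stein_comparison h th c x0 s) x
    (th * exp (- (th * x)) * (h x - h x0 - s * (x - x0))).
Proof.
  intros Hh Hth. unfold stein_comparison.
  auto_derive.
  - eexists; apply is_derive_exp_partial_int; auto.
  - rewrite Derive_exp_partial_int by auto. unfold exp_weighted, exp_density. field. lra.
Qed.

Lemma stein_comparison_cv0 h th c x0 s : 0 < th -> exp_int_limit h th c -> -1 <= s <= 1 ->
  forall eps, 0 < eps -> exists X, forall x, X <= x -> Rabs (stein_comparison h th c x0 s x) < eps.
Proof.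
  intros Hth Hc Hs eps He.
  set (a := Rabs (h x0) + Rabs x0 + 1/th).
  assert (Hth' : 0 < 1/th) by (apply Rdiv_lt_0_compat; lra).
  destruct (Hc (eps/2) ltac:(lra)) as [B HB].
  destruct (exp_linear_decay th a (eps/2) Hth) as [X [HX0 HX]]; try lra.
  { unfold a. pose proof (Rabs_pos (h x0)). pose proof (Rabs_pos x0). lra. }
  exists (Rmax B X). intros x Hx.
  specialize (HB x (Rle_trans _ _ _ (Rmax_l _ _) Hx)).
  specialize (HX x (Rle_trans _ _ _ (Rmax_r _ _) Hx)).
  assert (Hline : Rabs (h x0 + s * (x - x0) + s / th) <= a + x).
  { unfold a. apply Rabs_le.
    pose proof (proj1 (Rabs_le_between (h x0) _) (Rle_refl _)).
    pose proof (proj1 (Rabs_le_between x0 _) (Rle_refl _)).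
    assert (0 <= x) by (pose proof (Rmax_r B X); lra).
    assert (0 < / th) by (apply Rinv_0_lt_compat; lra).
    assert (Habs : Rabs s <= 1) by (apply Rabs_le; lra).
    assert (Hsth : Rabs (s * / th) <= / th).
    { rewrite Rabs_mult, (Rabs_right (/ th)) by lra. pose proof (Rabs_pos s). nra. }
    assert (Hsx : Rabs (s * (x - x0)) <= x + Rabs x0).
    { rewrite Rabs_mult. pose proof (Rabs_pos s). pose proof (Rabs_pos (x - x0)).
      pose proof (Rabs_triang x (- x0)) as Htri. rewrite Rabs_Ropp, (Rabs_right x) in Htri by lra.
      unfold Rminus. nra. }
    apply Rabs_le_between in Hsth. apply Rabs_le_between in Hsx.
    unfold Rdiv in *. split; lra. }
  unfold stein_comparison. eapply Rle_lt_trans; [apply Rabs_triang|].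
  rewrite Rabs_mult, (Rabs_right (exp _)) by (left; apply exp_pos).
  pose proof (exp_pos (- (th * x))).
  assert (exp (- (th * x)) * Rabs (h x0 + s * (x - x0) + s / th) <= exp (- (th * x)) * (a + x))
    by (apply Rmult_le_compat_l; lra).
  lra.
Qed.

(* The line [l] dominates [h] on [[x0, +oo)] (for [s = 1]) or is dominated by it (for [s = -1]). *)
Lemma stein_comparison_sign h th c x0 s : Lip1 h -> 0 < th -> exp_int_limit h th c ->
  s = 1 \/ s = -1 -> 0 <= s * stein_comparison h th c x0 s x0.
Proof.
  intros Hh Hth Hc Hs.
  set (phi := stein_comparison h th c x0 s).
  destruct (Rle_or_lt 0 (s * phi x0)) as [|Hneg]; auto.
  destruct (stein_comparison_cv0 h th c x0 s Hth Hc ltac:(lra) (- (s * phi x0)) ltac:(lra))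
    as [X HX].
  set (x := Rmax X x0).
  specialize (HX x (Rmax_l _ _)). fold phi in HX.
  destruct (MVT_gen phi x0 x (fun y => th * exp (- (th * y)) * (h y - h x0 - s * (y - x0))))
    as [y [Hy Heq]].
  - intros y _. apply is_derive_stein_comparison; auto.
  - intros y _. apply continuity_pt_filterlim, (ex_derive_continuous phi).
    eexists. apply is_derive_stein_comparison; auto.
  - rewrite Rmin_left, Rmax_right in Hy by (unfold x; apply Rmax_r).
    assert (Hslope : s * (h y - h x0 - s * (y - x0)) <= 0).
    { pose proof (Hh y x0) as Hl. rewrite (Rabs_right (y - x0)) in Hl by lra.
      apply Rabs_le_between in Hl. destruct Hs; subst s; lra. }
    assert (Hdec : s * (phi x - phi x0) <= 0).
    { rewrite Heq. pose proof (exp_pos (- (th * y))).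
      assert (0 <= x - x0) by lra.
      replace (s * (th * exp (- (th * y)) * (h y - h x0 - s * (y - x0)) * (x - x0)))
        with ((th * exp (- (th * y)) * (x - x0)) * (s * (h y - h x0 - s * (y - x0)))) by ring.
      assert (0 <= th * exp (- (th * y)) * (x - x0))
        by (apply Rmult_le_pos; [apply Rmult_le_pos|]; lra).
      nra. }
    pose proof (proj1 (Rabs_le_between (phi x) _) (Rle_refl _)).
    destruct Hs; subst s; lra.
Qed.

Lemma stein_exp_deriv_bound h th c x : Lip1 h -> 0 < th -> exp_int_limit h th c ->
  Rabs (stein_exp_deriv h th c x) <= 1.
Proof.
  intros Hh Hth Hc.
  assert (Hexp : exp (th * x) * exp (- (th * x)) = 1)
    by (rewrite <- exp_plus, Rplus_opp_r; apply exp_0).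
  assert (Hsign : forall s, s = 1 \/ s = -1 ->
    0 <= s * (exp (th * x) * (exp_partial_int h th x - c) + h x) + 1 / th).
  { intros s Hs. pose proof (stein_comparison_sign h th c x s Hh Hth Hc Hs) as H.
    apply (Rmult_le_compat_l (exp (th * x))) in H; [|left; apply exp_pos].
    unfold stein_comparison in H. rewrite Rminus_diag, Rmult_0_r in H.
    replace (exp (th * x) * (s * (exp_partial_int h th x - c
               + exp (- (th * x)) * (h x + s * 0 + s / th))))
      with (s * (exp (th * x) * (exp_partial_int h th x - c))
            + (exp (th * x) * exp (- (th * x))) * (s * h x + s * s / th)) in H
      by (unfold Rdiv; ring).
    rewrite Hexp in H. destruct Hs; subst s; unfold Rdiv in *; lra. }
  pose proof (Hsign 1 (or_introl eq_refl)). pose proof (Hsign (-1) (or_intror eq_refl)).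
  unfold stein_exp_deriv. rewrite Rabs_mult, Rabs_right by lra.
  apply (Rmult_le_reg_l (/ th)); [apply Rinv_0_lt_compat; lra|].
  rewrite <- Rmult_assoc, Rinv_l, Rmult_1_l, Rmult_1_r by lra.
  apply Rabs_le. unfold Rdiv in *. lra.
Qed.

Lemma is_derive_stein_exp h th c x : Lip1 h -> 0 < th ->
  is_derive (stein_exp h th c) x (stein_exp_deriv h th c x).
Proof.
  intros Hh Hth. unfold stein_exp, stein_exp_deriv.
  auto_derive.
  - eexists; apply is_derive_exp_partial_int; auto.
  - rewrite Derive_exp_partial_int by auto. unfold exp_weighted, exp_density.
    assert (exp (th * x) * exp (- (th * x)) = 1)
      by (rewrite <- exp_plus, Rplus_opp_r; apply exp_0).
    transitivity (th * exp (th * x) * (exp_partial_int h th x - c)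
                  + th * h x * (exp (th * x) * exp (- (th * x)))); [ring|].
    rewrite H. ring.
Qed.

Lemma stein_exp_mvt h th c x y : Lip1 h -> 0 < th ->
  exists z, Rmin x y <= z <= Rmax x y /\
    stein_exp h th c y - stein_exp h th c x = stein_exp_deriv h th c z * (y - x).
Proof.
  intros Hh Hth.
  destruct (MVT_gen (stein_exp h th c) x y (stein_exp_deriv h th c)) as [z Hz].
  - intros z _. apply is_derive_stein_exp; auto.
  - intros z _. apply continuity_pt_filterlim, (ex_derive_continuous (stein_exp h th c)).
    eexists. apply is_derive_stein_exp; auto.
  - exists z; auto.
Qed.

Lemma stein_exp_Lip1 h th c : Lip1 h -> 0 < th -> exp_int_limit h th c -> Lip1 (stein_exp h th c).
Proof.
  intros Hh Hth Hc y x. destruct (stein_exp_mvt h th c x y Hh Hth) as [z [_ ->]].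
  rewrite Rabs_mult. pose proof (stein_exp_deriv_bound h th c z Hh Hth Hc).
  pose proof (Rabs_pos (y - x)). nra.
Qed.

Lemma stein_exp_deriv_lipschitz h th c x y : Lip1 h -> 0 < th -> exp_int_limit h th c ->
  Rabs (stein_exp_deriv h th c y - stein_exp_deriv h th c x) <= 2 * th * Rabs (y - x).
Proof.
  intros Hh Hth Hc.
  replace (stein_exp_deriv h th c y - stein_exp_deriv h th c x)
    with (th * ((stein_exp h th c y - stein_exp h th c x) + (h y - h x)))
    by (unfold stein_exp_deriv, stein_exp; ring).
  rewrite Rabs_mult, Rabs_right by lra.
  pose proof (stein_exp_Lip1 h th c Hh Hth Hc y x). pose proof (Hh y x).
  pose proof (Rabs_triang (stein_exp h th c y - stein_exp h th c x) (h y - h x)). nra.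
Qed.

Lemma stein_exp_taylor h th c x y : Lip1 h -> 0 < th -> exp_int_limit h th c ->
  Rabs (stein_exp h th c y - stein_exp h th c x - stein_exp_deriv h th c x * (y - x))
  <= 2 * th * ((y - x) * (y - x)).
Proof.
  intros Hh Hth Hc. destruct (stein_exp_mvt h th c x y Hh Hth) as [z [Hz ->]].
  replace (stein_exp_deriv h th c z * (y - x) - stein_exp_deriv h th c x * (y - x))
    with ((stein_exp_deriv h th c z - stein_exp_deriv h th c x) * (y - x)) by ring.
  rewrite Rabs_mult.
  pose proof (stein_exp_deriv_lipschitz h th c x z Hh Hth Hc).
  assert (Rabs (z - x) <= Rabs (y - x)).
  { apply Rabs_le_between_min_max. rewrite Rmin_comm, Rmax_comm. exact Hz. }
  rewrite <- (Rabs_right ((y - x) * (y - x))) by (apply Rle_ge, Rle_0_sqr).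
  rewrite Rabs_mult.
  rewrite <- Rmult_assoc. apply Rmult_le_compat_r; [apply Rabs_pos|].
  eapply Rle_trans; [eassumption|]. apply Rmult_le_compat_l; lra.
Qed.

Lemma stein_exp_0 h th c : stein_exp h th c 0 = 0.
Proof.
  unfold stein_exp, exp_partial_int. rewrite RInt_point, Rmult_0_r, exp_0.
  unfold zero; simpl. ring.
Qed.

Lemma stein_exp_equation h th c x : 0 < th ->
  stein_exp_deriv h th c x / th - stein_exp h th c x = h x - c.
Proof. intros Hth. unfold stein_exp_deriv, stein_exp. field. lra. Qed.

Lemma stein_exp_abs_le h th c x : Lip1 h -> 0 < th -> exp_int_limit h th c -> 0 <= x ->
  Rabs (stein_exp h th c x) <= x.
Proof.
  intros Hh Hth Hc Hx. pose proof (stein_exp_Lip1 h th c Hh Hth Hc x 0) as H.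
  rewrite stein_exp_0, !Rminus_0_r, (Rabs_right x) in H by lra. exact H.
Qed.

(** * Finite sums and series *)

Lemma cv_eventually_const (u : nat -> R) c n0 : (forall n, (n0 <= n)%nat -> u n = c) -> Un_cv u c.
Proof.
  intros H eps He. exists n0. intros n Hn. rewrite H by lia.
  unfold Rdist. rewrite Rminus_diag, Rabs_R0. auto.
Qed.

Lemma sum_f_R0_swap (F : nat -> nat -> R) n m :
  sum_f_R0 (fun i => sum_f_R0 (fun j => F i j) m) n
  = sum_f_R0 (fun j => sum_f_R0 (fun i => F i j) n) m.
Proof. induction n; simpl; [reflexivity|]. rewrite IHn, <- sum_plus. reflexivity. Qed.

Lemma sum_f_R0_eventually_zero f n m : (forall k, (n < k)%nat -> f k = 0) -> (n <= m)%nat ->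
  sum_f_R0 f m = sum_f_R0 f n.
Proof. intros H Hm. induction Hm; simpl; [reflexivity|]. rewrite IHHm, H by lia. ring. Qed.

Lemma sum_f_R0_indicator k (psi : nat -> R) J :
  sum_f_R0 (fun j => (if Nat.eqb k j then 1 else 0) * psi j) J
  = if Nat.leb k J then psi k else 0.
Proof.
  induction J; simpl.
  - destruct k; simpl; ring.
  - rewrite IHJ. destruct (Nat.eqb_spec k (S J)), (Nat.leb_spec k J), (Nat.leb_spec k (S J));
      try lia; try subst; ring.
Qed.

Lemma window_sum_cv0 e k : Un_cv e 0 -> Un_cv (fun n => sum_f_R0 (fun i => e (S n + i)%nat) k) 0.
Proof.
  intros He. induction k; simpl.
  - intros eps Heps. destruct (He eps Heps) as [N HN]. exists N. intros n Hn. apply HN. lia.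
  - replace 0 with (0 + 0) by ring. apply CV_plus; auto.
    intros eps Heps. destruct (He eps Heps) as [N HN]. exists N. intros n Hn. apply HN. lia.
Qed.

Lemma infinite_sum_ext f g l : (forall n, f n = g n) -> infinite_sum f l -> infinite_sum g l.
Proof. intros H. apply Un_cv_ext. intros n. apply sum_eq. auto. Qed.

Lemma infinite_sum_plus f g l1 l2 : infinite_sum f l1 -> infinite_sum g l2 ->
  infinite_sum (fun n => f n + g n) (l1 + l2).
Proof. intros H1 H2. eapply Un_cv_ext; [intros n; symmetry; apply sum_plus|]. apply CV_plus; auto. Qed.

Lemma infinite_sum_minus f g l1 l2 : infinite_sum f l1 -> infinite_sum g l2 ->
  infinite_sum (fun n => f n - g n) (l1 - l2).
Proof. intros H1 H2. eapply Un_cv_ext; [intros n; symmetry; apply minus_sum|]. apply CV_minus; auto. Qed.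

Lemma infinite_sum_scal f c l : infinite_sum f l -> infinite_sum (fun n => c * f n) (c * l).
Proof.
  intros H. eapply Un_cv_ext; [intros n; rewrite scal_sum; apply sum_eq; intros; apply Rmult_comm|].
  apply CV_mult; auto. apply cv_eventually_const with 0%nat; auto.
Qed.

Lemma infinite_sum_le f g l1 l2 : infinite_sum f l1 -> infinite_sum g l2 ->
  (forall n, f n <= g n) -> l1 <= l2.
Proof. intros H1 H2 H. eapply Rle_cv_lim; [| exact H1 | exact H2]. intros n. apply sum_Rle. auto. Qed.

Lemma infinite_sum_abs_le f g l m : infinite_sum f l -> infinite_sum g m ->
  (forall n, Rabs (f n) <= g n) -> Rabs l <= m.
Proof. intros H1 H2 H. exact (sum_cv_maj g (fun n _ => f n) 0 l m H1 H2 (fun n => H n)). Qed.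

Lemma infinite_sum_eventually_zero f N : (forall n, (N < n)%nat -> f n = 0) ->
  infinite_sum f (sum_f_R0 f N).
Proof. intros H. apply cv_eventually_const with N. intros n Hn. apply sum_f_R0_eventually_zero; auto. Qed.

Lemma infinite_sum_cv0 f l : infinite_sum f l -> Un_cv f 0.
Proof.
  intros H. assert (Hd := CV_minus _ _ _ _ (CV_shift' _ 1 _ H) H).
  rewrite Rminus_diag in Hd. apply CV_shift with 1%nat.
  eapply Un_cv_ext; [| exact Hd]. intros n. cbv beta. rewrite Nat.add_1_r, tech5. ring.
Qed.

Lemma infinite_sum_dominated f g l : (forall n, Rabs (f n) <= g n) -> infinite_sum g l ->
  exists l', infinite_sum f l'.
Proof.
  intros H Hg. destruct (ex_series_le f g H) as [l' Hl'].
  - exists l. apply is_series_Reals. auto.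
  - exists l'. apply is_series_Reals. auto.
Qed.

Lemma infinite_sum_of_bounded_nonneg f C : (forall n, 0 <= f n) -> (forall n, sum_f_R0 f n <= C) ->
  exists l, infinite_sum f l.
Proof.
  intros Hf HC. destruct (growing_cv (sum_f_R0 f)) as [l Hl].
  - intros n. simpl. pose proof (Hf (S n)). lra.
  - exists C. intros x [n ->]. auto.
  - exists l. exact Hl.
Qed.

(** * Discrete primitives *)

Section LeftSum.

Variables (G Gd : R -> R) (L e : R).

Fixpoint left_sum (n : nat) : R :=
  match n with O => 0 | S n' => left_sum n' + G (e * INR n') end.

Lemma left_sum_bound : 0 <= e -> (forall x, 0 <= x -> Rabs (G x) <= x) ->
  forall n, Rabs (left_sum n) <= e * (INR n * INR n).
Proof.
  intros He HG n. induction n; simpl left_sum.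
  - rewrite Rabs_R0. simpl. lra.
  - rewrite S_INR. eapply Rle_trans; [apply Rabs_triang|].
    pose proof (pos_INR n). pose proof (HG (e * INR n) ltac:(nra)). nra.
Qed.

Hypothesis HL : 0 <= L.
Hypothesis G_taylor : forall x y, Rabs (G y - G x - Gd x * (y - x)) <= L * ((y - x) * (y - x)).

Lemma left_sum_taylor_up i n :
  Rabs (left_sum (i + n) - left_sum i - INR n * G (e * INR i)
        - e * Gd (e * INR i) * (INR n * (INR n - 1) / 2))
  <= L * (e * e) * (INR n * INR n * INR n).
Proof.
  induction n.
  - rewrite Nat.add_0_r. simpl INR.
    match goal with |- Rabs ?X <= _ => replace X with 0 by field end.
    rewrite Rabs_R0. lra.
  - replace (i + S n)%nat with (S (i + n)) by lia. simpl left_sum.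
    pose proof (G_taylor (e * INR i) (e * INR (i + n))) as Hn.
    rewrite plus_INR in *. rewrite S_INR.
    replace (e * (INR i + INR n) - e * INR i) with (e * INR n) in Hn by ring.
    set (E1 := left_sum (i + n) - left_sum i - INR n * G (e * INR i)
               - e * Gd (e * INR i) * (INR n * (INR n - 1) / 2)) in *.
    set (E2 := G (e * (INR i + INR n)) - G (e * INR i) - Gd (e * INR i) * (e * INR n)) in *.
    replace (left_sum (i + n) + G (e * (INR i + INR n)) - left_sum i - (INR n + 1) * G (e * INR i)
             - e * Gd (e * INR i) * ((INR n + 1) * (INR n + 1 - 1) / 2))
      with (E1 + E2) by (unfold E1, E2; field).
    eapply Rle_trans; [apply Rabs_triang|].
    pose proof (pos_INR n). clearbody E1 E2.
    assert (L * (e * e) * (INR n * INR n * INR n) + L * (e * e) * (INR n * INR n)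
            <= L * (e * e) * ((INR n + 1) * (INR n + 1) * (INR n + 1))).
    { rewrite <- Rmult_plus_distr_l. apply Rmult_le_compat_l; [|nra].
      apply Rmult_le_pos; [lra | apply Rle_0_sqr]. }
    replace (L * (e * INR n * (e * INR n))) with (L * (e * e) * (INR n * INR n)) in Hn by ring.
    lra.
Qed.

Lemma left_sum_taylor_down i n : (n <= i)%nat ->
  Rabs (left_sum (i - n) - left_sum i + INR n * G (e * INR i)
        - e * Gd (e * INR i) * (INR n * (INR n + 1) / 2))
  <= L * (e * e) * (INR n * INR n * INR n).
Proof.
  induction n; intros Hn.
  - rewrite Nat.sub_0_r. simpl INR.
    match goal with |- Rabs ?X <= _ => replace X with 0 by field end.
    rewrite Rabs_R0. lra.
  - specialize (IHn ltac:(lia)).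
    assert (Hp : left_sum (i - n) = left_sum (i - S n) + G (e * INR (i - S n))).
    { replace (i - n)%nat with (S (i - S n)) by lia. reflexivity. }
    pose proof (G_taylor (e * INR i) (e * INR (i - S n))) as Hk.
    rewrite minus_INR, S_INR in Hk, Hp by lia. rewrite S_INR.
    replace (e * (INR i - (INR n + 1)) - e * INR i) with (- (e * (INR n + 1))) in Hk by ring.
    set (E1 := left_sum (i - n) - left_sum i + INR n * G (e * INR i)
               - e * Gd (e * INR i) * (INR n * (INR n + 1) / 2)) in *.
    set (E2 := G (e * (INR i - (INR n + 1))) - G (e * INR i)
               - Gd (e * INR i) * - (e * (INR n + 1))) in *.
    replace (left_sum (i - S n) - left_sum i + (INR n + 1) * G (e * INR i)
             - e * Gd (e * INR i) * ((INR n + 1) * (INR n + 1 + 1) / 2))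
      with (E1 - E2) by (unfold E1, E2; rewrite Hp; field).
    eapply Rle_trans; [apply Rabs_triang|]. rewrite Rabs_Ropp.
    pose proof (pos_INR n). clearbody E1 E2.
    assert (L * (e * e) * (INR n * INR n * INR n) + L * (e * e) * ((INR n + 1) * (INR n + 1))
            <= L * (e * e) * ((INR n + 1) * (INR n + 1) * (INR n + 1))).
    { rewrite <- Rmult_plus_distr_l. apply Rmult_le_compat_l; [|nra].
      apply Rmult_le_pos; [lra | apply Rle_0_sqr]. }
    replace (L * (- (e * (INR n + 1)) * - (e * (INR n + 1))))
      with (L * (e * e) * ((INR n + 1) * (INR n + 1))) in Hk by ring.
    lra.
Qed.

Lemma left_sum_taylor i j :
  Rabs (left_sum j - left_sum i - (INR j - INR i) * G (e * INR i)
        - e * Gd (e * INR i) * ((INR j - INR i) * ((INR j - INR i) - 1) / 2))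
  <= L * (e * e) * (Rabs (INR j - INR i) * Rabs (INR j - INR i) * Rabs (INR j - INR i)).
Proof.
  destruct (Nat.le_gt_cases i j) as [Hij|Hij].
  - replace j with (i + (j - i))%nat by lia. rewrite plus_INR.
    replace (INR i + INR (j - i) - INR i) with (INR (j - i)) by ring.
    rewrite (Rabs_right (INR (j - i))) by (apply Rle_ge, pos_INR).
    apply left_sum_taylor_up.
  - replace j with (i - (i - j))%nat by lia. rewrite (minus_INR i (i - j)) by lia.
    replace (INR i - INR (i - j) - INR i) with (- INR (i - j)) by ring.
    rewrite Rabs_Ropp, (Rabs_right (INR (i - j))) by (apply Rle_ge, pos_INR).
    pose proof (left_sum_taylor_down i (i - j) ltac:(lia)).
    match goal with |- Rabs ?X <= _ => replace X with
      (left_sum (i - (i - j)) - left_sum i + INR (i - j) * G (e * INR i)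
       - e * Gd (e * INR i) * (INR (i - j) * (INR (i - j) + 1) / 2)) by field end.
    auto.
Qed.

End LeftSum.

(** * The queue-length chain *)

Lemma INR_sub_sub_cases i a s :
  (s <= i + a)%nat /\ INR (i + a - s) = INR i + INR a - INR s \/
  (i + a < s)%nat /\ INR (i + a - s) = 0.
Proof.
  destruct (Nat.le_gt_cases s (i + a)).
  - left. split; auto. rewrite minus_INR, plus_INR; auto.
  - right. split; auto. replace (i + a - s)%nat with 0%nat by lia. auto.
Qed.

(* The truncation at [0] costs at most [smax^3]; the rest is the cubic Taylor expansion
   of [(i + x)^3] with [|x| <= amax + smax]. *)
Lemma truncated_cube_step_le i a s N amax smax : (a <= amax)%nat -> (s <= smax)%nat ->
  INR (Nat.min (i + a - s) N) ^ 3
  <= INR i ^ 3 + 3 * (INR i * INR i) * (INR a - INR s)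
     + 3 * INR i * ((INR amax + INR smax) * (INR amax + INR smax))
     + (INR amax + INR smax) ^ 3 + INR smax ^ 3.
Proof.
  intros Ha Hs.
  apply le_INR in Ha, Hs. pose proof (pos_INR a). pose proof (pos_INR s). pose proof (pos_INR i).
  assert (Hmin : INR (Nat.min (i + a - s) N) ^ 3 <= INR (i + a - s) ^ 3).
  { apply pow_incr. split; [apply pos_INR | apply le_INR; lia]. }
  assert (Htrunc : INR (i + a - s) ^ 3 <= (INR i + (INR a - INR s)) ^ 3 + INR smax ^ 3).
  { destruct (INR_sub_sub_cases i a s) as [[_ ->] | [Hlt ->]].
    - pose proof (pow_le (INR smax) 3 (pos_INR smax)).
      replace (INR i + INR a - INR s) with (INR i + (INR a - INR s)) by ring. lra.
    - apply lt_INR in Hlt. rewrite plus_INR in Hlt.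
      assert (Hy : 0 <= - (INR i + (INR a - INR s)) <= INR smax) by lra.
      pose proof (pow_incr _ _ 3 Hy) as Hp.
      replace ((- (INR i + (INR a - INR s))) ^ 3) with (- ((INR i + (INR a - INR s)) ^ 3)) in Hp
        by ring.
      simpl. simpl in Hp. lra. }
  assert (Hx : - INR smax <= INR a - INR s <= INR amax) by lra.
  revert Htrunc Hx. generalize (INR a - INR s). intros x Htrunc Hx.
  set (M := INR amax + INR smax).
  assert (Hxm : - M <= x <= M) by (unfold M; pose proof (pos_INR amax); pose proof (pos_INR smax); lra).
  assert (x * x <= M * M) by nra.
  assert (x * x * x <= M * (x * x)) by (pose proof (Rle_0_sqr x); unfold Rsqr in *; nra).
  assert (M * (x * x) <= M * (M * M)) by (apply Rmult_le_compat_l; lra).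
  simpl in *. nra.
Qed.

(* The unused service of a slot: [q(t+1) - q(t) = (a - s) + unused]. *)
Definition unused (i a s : nat) : R := INR (i + a - s) - INR i - (INR a - INR s).

Lemma unused_bounds i a s smax : (s <= smax)%nat -> 0 <= unused i a s <= INR smax.
Proof.
  intros Hs. apply le_INR in Hs. pose proof (pos_INR i). pose proof (pos_INR a). pose proof (pos_INR s).
  unfold unused. destruct (INR_sub_sub_cases i a s) as [[_ ->] | [Hlt ->]]; [lra|].
  apply lt_INR in Hlt. rewrite plus_INR in Hlt. lra.
Qed.

Lemma unused_eq_0 i a s smax : (s <= smax)%nat -> (smax <= i)%nat -> unused i a s = 0.
Proof.
  intros Hs Hi. unfold unused. destruct (INR_sub_sub_cases i a s) as [[_ ->] | [Hlt _]]; [ring | lia].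
Qed.

Lemma queue_increment_bounds i a s smax : (s <= smax)%nat ->
  - INR smax <= INR (i + a - s) - INR i <= INR a.
Proof.
  intros Hs. apply le_INR in Hs. pose proof (pos_INR i). pose proof (pos_INR a). pose proof (pos_INR s).
  destruct (INR_sub_sub_cases i a s) as [[_ ->] | [Hlt ->]]; [lra|].
  apply lt_INR in Hlt. rewrite plus_INR in Hlt. lra.
Qed.

Lemma pmf_second_moment p M : bounded_pmf p M ->
  sum_f_R0 (fun n => p n * (INR n * INR n)) M = pmf_var p M + pmf_mean p M * pmf_mean p M.
Proof.
  intros [_ [_ H1]]. unfold pmf_var. set (m := pmf_mean p M).
  transitivity (sum_f_R0 (fun n => (INR n - m) ^ 2 * p n) M
                + 2 * m * sum_f_R0 (fun n => INR n * p n) M - m * m * sum_f_R0 p M).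
  - rewrite !scal_sum, <- sum_plus, <- minus_sum. apply sum_eq. intros; ring.
  - fold (pmf_mean p M). fold m. rewrite H1. ring.
Qed.

Section Queue.

Variables (pa : nat -> R) (amax : nat) (ps : nat -> R) (smax : nat).
Hypotheses (Hpa : bounded_pmf pa amax) (Hps : bounded_pmf ps smax).

Definition Eas (F : nat -> nat -> R) : R :=
  sum_f_R0 (fun a => sum_f_R0 (fun s => pa a * ps s * F a s) smax) amax.

Lemma Eas_ext F F' : (forall a s, (a <= amax)%nat -> (s <= smax)%nat -> F a s = F' a s) ->
  Eas F = Eas F'.
Proof. intros H. apply sum_eq. intros. apply sum_eq. intros. rewrite H; auto. Qed.

Lemma Eas_le F F' : (forall a s, (a <= amax)%nat -> (s <= smax)%nat -> F a s <= F' a s) ->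
  Eas F <= Eas F'.
Proof.
  destruct Hpa as [Ha _], Hps as [Hs _]. intros H. apply sum_Rle. intros. apply sum_Rle. intros.
  apply Rmult_le_compat_l; auto. apply Rmult_le_pos; auto.
Qed.

Lemma Eas_plus F F' : Eas (fun a s => F a s + F' a s) = Eas F + Eas F'.
Proof.
  unfold Eas. rewrite <- sum_plus. apply sum_eq. intros.
  rewrite <- sum_plus. apply sum_eq. intros. ring.
Qed.

Lemma Eas_scal c F : Eas (fun a s => c * F a s) = c * Eas F.
Proof.
  unfold Eas. rewrite scal_sum. apply sum_eq. intros.
  rewrite Rmult_comm, scal_sum. apply sum_eq. intros. ring.
Qed.

Lemma Eas_fst f : Eas (fun a _ => f a) = sum_f_R0 (fun a => pa a * f a) amax.
Proof.
  destruct Hps as [_ [_ Hs]]. apply sum_eq. intros a _.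
  rewrite <- (Rmult_1_r (pa a * f a)), <- Hs, scal_sum. apply sum_eq. intros. ring.
Qed.

Lemma Eas_snd f : Eas (fun _ s => f s) = sum_f_R0 (fun s => ps s * f s) smax.
Proof.
  destruct Hpa as [_ [_ Ha]]. unfold Eas. rewrite sum_f_R0_swap. apply sum_eq. intros s _.
  rewrite <- (Rmult_1_r (ps s * f s)), <- Ha, scal_sum. apply sum_eq. intros. ring.
Qed.

Lemma Eas_const c : Eas (fun _ _ => c) = c.
Proof.
  rewrite (Eas_fst (fun _ => c)). destruct Hpa as [_ [_ Ha]].
  transitivity (c * sum_f_R0 pa amax); [|rewrite Ha; ring].
  rewrite scal_sum. apply sum_eq. intros. ring.
Qed.

Lemma Eas_prod f g : Eas (fun a s => f a * g s)
  = sum_f_R0 (fun a => pa a * f a) amax * sum_f_R0 (fun s => ps s * g s) smax.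
Proof.
  unfold Eas. rewrite Rmult_comm, scal_sum. apply sum_eq. intros a _.
  rewrite scal_sum. apply sum_eq. intros. ring.
Qed.

Lemma Eas_abs F : Rabs (Eas F) <= Eas (fun a s => Rabs (F a s)).
Proof.
  apply Rabs_le. split.
  - rewrite <- (Rmult_1_l (Eas (fun a s => Rabs (F a s)))), Ropp_mult_distr_l, <- Eas_scal.
    apply Eas_le. intros. pose proof (Rle_abs (- F a s)). rewrite Rabs_Ropp in *. lra.
  - apply Eas_le. intros. apply Rle_abs.
Qed.

Lemma Eas_nonneg F : (forall a s, (a <= amax)%nat -> (s <= smax)%nat -> 0 <= F a s) -> 0 <= Eas F.
Proof. intros H. rewrite <- (Eas_const 0). apply Eas_le. auto. Qed.

Lemma Eas_diff : Eas (fun a s => INR a - INR s) = pmf_mean pa amax - pmf_mean ps smax.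
Proof.
  rewrite (Eas_ext _ (fun a s => INR a + -1 * INR s)) by (intros; ring).
  rewrite Eas_plus, Eas_scal, Eas_fst, (Eas_snd INR).
  unfold pmf_mean. rewrite (sum_eq (fun a => pa a * INR a) (fun n => INR n * pa n)),
    (sum_eq (fun s => ps s * INR s) (fun n => INR n * ps n)) by (intros; ring).
  ring.
Qed.

Lemma Eas_diff_sqr : Eas (fun a s => (INR a - INR s) * (INR a - INR s))
  = pmf_var pa amax + pmf_var ps smax
    + (pmf_mean pa amax - pmf_mean ps smax) * (pmf_mean pa amax - pmf_mean ps smax).
Proof.
  rewrite (Eas_ext _ (fun a s => INR a * INR a + (-2 * (INR a * INR s) + INR s * INR s)))
    by (intros; ring).
  rewrite !Eas_plus, Eas_scal, Eas_prod, (Eas_fst (fun a => INR a * INR a)),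
    (Eas_snd (fun s => INR s * INR s)), !pmf_second_moment by auto.
  unfold pmf_mean. rewrite (sum_eq (fun a => pa a * INR a) (fun n => INR n * pa n)),
    (sum_eq (fun s => ps s * INR s) (fun n => INR n * ps n)) by (intros; ring).
  ring.
Qed.

Definition step_exp (psi : nat -> R) (i : nat) : R := Eas (fun a s => psi (i + a - s)%nat).

Lemma step_exp_bound psi B i : (forall j, (j <= i + amax)%nat -> Rabs (psi j) <= B) ->
  Rabs (step_exp psi i) <= B.
Proof.
  intros H. eapply Rle_trans; [apply Eas_abs|].
  rewrite <- (Eas_const B). apply Eas_le. intros. apply H. lia.
Qed.

Lemma sum_trans_mul psi i J : sum_f_R0 (fun j => trans pa amax ps smax i j * psi j) J
  = Eas (fun a s => if Nat.leb (i + a - s) J then psi (i + a - s)%nat else 0).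
Proof.
  unfold trans, Eas.
  rewrite (sum_eq _ (fun j => sum_f_R0 (fun a => sum_f_R0 (fun s => pa a * ps s *
             ((if Nat.eqb (i + a - s) j then 1 else 0) * psi j)) smax) amax))
    by (intros; rewrite Rmult_comm, scal_sum; apply sum_eq; intros;
        rewrite Rmult_comm, scal_sum; apply sum_eq; intros; ring).
  rewrite sum_f_R0_swap. apply sum_eq. intros a _. rewrite sum_f_R0_swap.
  apply sum_eq. intros s _. rewrite <- sum_f_R0_indicator, scal_sum. apply sum_eq. intros. ring.
Qed.

Lemma sum_trans_mul_step_exp psi i J : (i + amax <= J)%nat ->
  sum_f_R0 (fun j => trans pa amax ps smax i j * psi j) J = step_exp psi i.
Proof.
  intros HJ. rewrite sum_trans_mul. apply Eas_ext. intros a s Ha Hs.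
  replace (Nat.leb (i + a - s) J) with true by (symmetry; apply Nat.leb_le; lia). reflexivity.
Qed.

Definition mean_unused (i : nat) : R := Eas (fun a s => unused i a s).

Lemma mean_unused_nonneg i : 0 <= mean_unused i.
Proof. apply Eas_nonneg. intros a s _ Hs. apply (unused_bounds i a s smax Hs). Qed.

Lemma mean_unused_eq_0 i : (smax <= i)%nat -> mean_unused i = 0.
Proof.
  intros Hi. transitivity (Eas (fun _ _ => 0)); [|apply Eas_const].
  apply Eas_ext. intros a s _ Hs. apply (unused_eq_0 i a s smax Hs Hi).
Qed.

Lemma step_exp_INR i :
  step_exp INR i = INR i + (pmf_mean pa amax - pmf_mean ps smax) + mean_unused i.
Proof.
  unfold step_exp, mean_unused. rewrite <- Eas_diff, <- (Eas_const (INR i)) at 1.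
  rewrite <- !Eas_plus. apply Eas_ext. intros. unfold unused. ring.
Qed.

Lemma trans_nonneg i j : 0 <= trans pa amax ps smax i j.
Proof. apply Eas_nonneg. intros. destruct (Nat.eqb _ _); lra. Qed.

Lemma sum_trans_le_1 i J : sum_f_R0 (fun j => trans pa amax ps smax i j) J <= 1.
Proof.
  rewrite (sum_eq _ (fun j => trans pa amax ps smax i j * 1)) by (intros; ring).
  rewrite sum_trans_mul. transitivity (Eas (fun _ _ => 1)); [|right; apply Eas_const].
  apply Eas_le. intros. destruct (Nat.leb _ _); lra.
Qed.

Lemma trans_eq_0 i j : (i + amax < j \/ j + smax < i)%nat -> trans pa amax ps smax i j = 0.
Proof.
  intros H. transitivity (Eas (fun _ _ => 0)); [|apply Eas_const].
  apply Eas_ext. intros a s Ha Hs. rewrite (proj2 (Nat.eqb_neq _ _)) by lia. ring.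
Qed.

Lemma sum_trans_mul_abs_le psi B i J :
  (forall j, Rabs (psi j) <= B j) -> (forall j k, (j <= k)%nat -> B j <= B k) ->
  Rabs (sum_f_R0 (fun j => trans pa amax ps smax i j * psi j) J) <= B (i + amax)%nat.
Proof.
  intros HB Hmono. eapply Rle_trans; [apply Rsum_abs|].
  transitivity (sum_f_R0 (fun j => trans pa amax ps smax i j * B (i + amax)%nat) J).
  - apply sum_Rle. intros j _.
    rewrite Rabs_mult, (Rabs_right (trans _ _ _ _ _ _)) by (apply Rle_ge, trans_nonneg).
    destruct (Nat.le_gt_cases j (i + amax)).
    + apply Rmult_le_compat_l; [apply trans_nonneg|].
      eapply Rle_trans; [apply HB | apply Hmono; auto].
    + rewrite trans_eq_0 by lia. lra.
  - rewrite <- scal_sum. rewrite <- (Rmult_1_r (B (i + amax)%nat)) at 2.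
    apply Rmult_le_compat_l; [| apply sum_trans_le_1].
    eapply Rle_trans; [apply Rabs_pos | apply HB].
Qed.

Section Stationary.

Variable pi : nat -> R.
Hypothesis Hpi : stationary pa amax ps smax pi.

Lemma stationary_nonneg i : 0 <= pi i.
Proof. apply Hpi. Qed.

Lemma stationary_total : infinite_sum pi 1.
Proof. apply Hpi. Qed.

Lemma stationary_balance j K : (j + smax <= K)%nat ->
  pi j = sum_f_R0 (fun i => pi i * trans pa amax ps smax i j) K.
Proof.
  intros HK. destruct Hpi as [_ [_ Hbal]]. apply (uniqueness_sum _ _ _ (Hbal j)).
  apply infinite_sum_eventually_zero. intros k Hk. rewrite trans_eq_0 by lia. ring.
Qed.

(* Summing the balance equations against [psi] up to [N + amax] captures [step_exp psi i]
   exactly for [i <= N], plus [amax + smax + 1] boundary terms. *)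
Lemma stationary_truncated_sum psi N :
  sum_f_R0 (fun j => pi j * psi j) (N + amax)
  = sum_f_R0 (fun i => pi i * step_exp psi i) N
    + sum_f_R0 (fun k => pi (S N + k)%nat
        * sum_f_R0 (fun j => trans pa amax ps smax (S N + k) j * psi j) (N + amax)) (amax + smax).
Proof.
  rewrite (sum_eq _ (fun j => sum_f_R0 (fun i => pi i * trans pa amax ps smax i j * psi j)
                                (S (N + amax + smax)))) by
    (intros j Hj; rewrite (stationary_balance j (S (N + amax + smax))) by lia;
     rewrite Rmult_comm, scal_sum; apply sum_eq; intros; ring).
  rewrite <- sum_f_R0_swap, (tech2 _ N) by lia.
  replace (S (N + amax + smax) - S N)%nat with (amax + smax)%nat by lia. f_equal.
  - apply sum_eq. intros i Hi. rewrite <- (sum_trans_mul_step_exp psi i (N + amax)) by lia.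
    rewrite scal_sum. apply sum_eq. intros. ring.
  - apply sum_eq. intros k _. rewrite scal_sum. apply sum_eq. intros. ring.
Qed.

Lemma stationary_step_exp psi B L1 L2 :
  (forall j, Rabs (psi j) <= B j) -> (forall j k, (j <= k)%nat -> B j <= B k) ->
  Un_cv (fun i => pi i * B (i + amax)%nat) 0 ->
  infinite_sum (fun j => pi j * psi j) L1 ->
  infinite_sum (fun i => pi i * step_exp psi i) L2 -> L1 = L2.
Proof.
  intros HB Hmono Hcv H1 H2.
  set (rest := fun N i => pi i * sum_f_R0 (fun j => trans pa amax ps smax i j * psi j) (N + amax)).
  assert (Hrest_bound : forall N i, Rabs (rest N i) <= pi i * B (i + amax)%nat).
  { intros N i. unfold rest.
    rewrite Rabs_mult, (Rabs_right (pi i)) by (apply Rle_ge, stationary_nonneg).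
    apply Rmult_le_compat_l; [apply stationary_nonneg | apply sum_trans_mul_abs_le; auto]. }
  assert (Hrest : Un_cv (fun N => sum_f_R0 (fun k => rest N (S N + k)%nat) (amax + smax)) 0).
  { intros e He.
    destruct (window_sum_cv0 _ (amax + smax) Hcv e He) as [N0 HN0]. exists N0. intros n Hn.
    specialize (HN0 n Hn). unfold Rdist in *. rewrite Rminus_0_r in *.
    eapply Rle_lt_trans; [apply Rsum_abs|]. eapply Rle_lt_trans; [|exact HN0].
    eapply Rle_trans; [apply sum_Rle; intros; apply Hrest_bound | apply Rle_abs]. }
  apply (UL_sequence (fun N => sum_f_R0 (fun j => pi j * psi j) (N + amax))).
  - apply CV_shift'. exact H1.
  - eapply Un_cv_ext; [intros N; symmetry; apply stationary_truncated_sum|].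
    rewrite <- (Rplus_0_r L2). apply CV_plus; auto.
Qed.

Lemma stationary_sum_bounded f B : (forall j, Rabs (f j) <= B) ->
  exists l, infinite_sum (fun j => pi j * f j) l.
Proof.
  intros Hf. apply (infinite_sum_dominated _ (fun j => B * pi j) (B * 1)).
  - intros j. rewrite Rabs_mult, Rabs_right, Rmult_comm by (apply Rle_ge, stationary_nonneg).
    apply Rmult_le_compat_r; [apply stationary_nonneg | apply Hf].
  - apply infinite_sum_scal, stationary_total.
Qed.

Lemma stationary_drift_bounded psi B : (forall j, Rabs (psi j) <= B) ->
  infinite_sum (fun i => pi i * (psi i - step_exp psi i)) 0.
Proof.
  intros Hpsi.
  destruct (stationary_sum_bounded psi B Hpsi) as [L1 HL1].
  destruct (stationary_sum_bounded (step_exp psi) B) as [L2 HL2].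
  { intros i. apply step_exp_bound. auto. }
  assert (Heq : L1 = L2).
  { apply (stationary_step_exp psi (fun _ => B)); auto.
    - intros. lra.
    - rewrite <- (Rmult_0_l B). apply CV_mult.
      + eapply infinite_sum_cv0, stationary_total.
      + apply cv_eventually_const with 0%nat. auto. }
  assert (H := infinite_sum_minus _ _ _ _ HL1 HL2). rewrite Heq, Rminus_diag in H.
  eapply infinite_sum_ext; [|exact H].
  intros i. cbv beta. ring.
Qed.

Variable eps : R.
Hypothesis Heps : 0 < eps.
Hypothesis Hdrift : pmf_mean pa amax - pmf_mean ps smax = - eps.

Let M := INR amax + INR smax.
Let C1 := 9 * (M * M) * (M * M) / (4 * eps) + (M ^ 3 + INR smax ^ 3).

Lemma truncated_cube_drift N i : (i <= N)%nat ->
  2 * eps * (INR i * INR i) - C1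
  <= INR (Nat.min i N) ^ 3 - step_exp (fun j => INR (Nat.min j N) ^ 3) i.
Proof.
  intros Hi. replace (Nat.min i N) with i by lia.
  assert (Hcube : step_exp (fun j => INR (Nat.min j N) ^ 3) i
    <= INR i ^ 3 - 3 * eps * (INR i * INR i) + 3 * (M * M) * INR i + (M ^ 3 + INR smax ^ 3)).
  { unfold step_exp.
    transitivity (Eas (fun a s => (INR i ^ 3 + 3 * INR i * (M * M) + (M ^ 3 + INR smax ^ 3))
                                  + 3 * (INR i * INR i) * (INR a - INR s))).
    - apply Eas_le. intros a s Ha Hs. unfold M.
      pose proof (truncated_cube_step_le i a s N amax smax Ha Hs). lra.
    - rewrite Eas_plus, Eas_const, Eas_scal, Eas_diff, Hdrift. lra. }
  assert (0 <= eps * (INR i - 3 * (M * M) / (2 * eps)) * (INR i - 3 * (M * M) / (2 * eps))).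
  { rewrite Rmult_assoc. apply Rmult_le_pos; [lra | apply Rle_0_sqr]. }
  assert (eps * (INR i - 3 * (M * M) / (2 * eps)) * (INR i - 3 * (M * M) / (2 * eps))
          = eps * (INR i * INR i) - 3 * (M * M) * INR i + 9 * (M * M) * (M * M) / (4 * eps))
    by (field; lra).
  unfold C1. lra.
Qed.

Lemma truncated_cube_drift_nonneg N i : (N <= i)%nat ->
  0 <= INR (Nat.min i N) ^ 3 - step_exp (fun j => INR (Nat.min j N) ^ 3) i.
Proof.
  intros Hi. replace (Nat.min i N) with N by lia.
  assert (step_exp (fun j => INR (Nat.min j N) ^ 3) i <= INR N ^ 3).
  { transitivity (Eas (fun _ _ => INR N ^ 3)); [|right; apply Eas_const].
    apply Eas_le. intros. apply pow_incr. split; [apply pos_INR | apply le_INR; lia]. }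
  lra.
Qed.

Lemma stationary_partial_second_moment n :
  sum_f_R0 (fun i => pi i * (INR i * INR i)) n <= C1 / (2 * eps).
Proof.
  set (psi := fun j => INR (Nat.min j n) ^ 3).
  assert (Hzero : infinite_sum (fun i => pi i * (psi i - step_exp psi i)) 0).
  { apply (stationary_drift_bounded psi (INR n ^ 3)). intros j. unfold psi.
    rewrite Rabs_right by (apply Rle_ge, pow_le, pos_INR).
    apply pow_incr. split; [apply pos_INR | apply le_INR; lia]. }
  set (LB := fun i => if Nat.leb i n then pi i * (2 * eps * (INR i * INR i) - C1) else 0).
  assert (HLB : sum_f_R0 LB n <= 0).
  { apply (infinite_sum_le _ _ _ _ (infinite_sum_eventually_zero LB n
             (fun k Hk => ltac:(unfold LB; destruct (Nat.leb_spec k n); [lia | reflexivity]))) Hzero).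
    intros i. unfold LB, psi. pose proof (stationary_nonneg i).
    destruct (Nat.leb_spec i n).
    - apply Rmult_le_compat_l; auto. apply truncated_cube_drift. auto.
    - apply Rmult_le_pos; auto. apply truncated_cube_drift_nonneg. lia. }
  assert (Hsum : sum_f_R0 LB n
                 = 2 * eps * sum_f_R0 (fun i => pi i * (INR i * INR i)) n - C1 * sum_f_R0 pi n).
  { rewrite !scal_sum, <- minus_sum. apply sum_eq. intros k Hk. unfold LB.
    destruct (Nat.leb_spec k n); [ring | lia]. }
  pose proof (sum_incr pi n 1 stationary_total stationary_nonneg).
  pose proof (cond_pos_sum pi n stationary_nonneg).
  assert (0 <= C1).
  { assert (0 <= M) by (unfold M; pose proof (pos_INR amax); pose proof (pos_INR smax); lra).
    pose proof (pow_le M 3 ltac:(lra)). pose proof (pow_le (INR smax) 3 (pos_INR smax)).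
    assert (0 <= 9 * (M * M) * (M * M) / (4 * eps)).
    { apply Rdiv_le_0_compat; [|lra]. pose proof (Rle_0_sqr M). unfold Rsqr in *. nra. }
    unfold C1. lra. }
  apply (Rmult_le_reg_l (2 * eps)); [lra|].
  replace (2 * eps * (C1 / (2 * eps))) with C1 by (field; lra). nra.
Qed.

Lemma stationary_second_moment :
  exists m2, infinite_sum (fun i => pi i * ((INR i + 1) * (INR i + 1))) m2.
Proof.
  apply (infinite_sum_of_bounded_nonneg _ (C1 / (2 * eps) * 2 + 1 * 2)).
  - intros. apply Rmult_le_pos; [apply stationary_nonneg | apply Rle_0_sqr].
  - intros n.
    transitivity (sum_f_R0 (fun i => pi i * (INR i * INR i) * 2 + pi i * 2) n).
    + apply sum_Rle. intros k _. pose proof (stationary_nonneg k).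
      pose proof (Rle_0_sqr (INR k - 1)). unfold Rsqr in *. nra.
    + rewrite sum_plus, <- !scal_sum.
      pose proof (stationary_partial_second_moment n).
      pose proof (sum_incr pi n 1 stationary_total stationary_nonneg). lra.
Qed.

Lemma stationary_step_exp_quadratic psi K : 0 <= K ->
  (forall j, Rabs (psi j) <= K * ((INR j + 1) * (INR j + 1))) ->
  exists L, infinite_sum (fun j => pi j * psi j) L
         /\ infinite_sum (fun j => pi j * step_exp psi j) L.
Proof.
  intros HK Hpsi.
  destruct stationary_second_moment as [m2 Hm2].
  set (B := fun j => K * ((INR j + 1) * (INR j + 1))).
  set (KA := K * ((INR amax + 1) * (INR amax + 1))).
  assert (HB_mono : forall j k, (j <= k)%nat -> B j <= B k).
  { intros j k Hjk. apply le_INR in Hjk. pose proof (pos_INR j). unfold B.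
    apply Rmult_le_compat_l; [auto | nra]. }
  assert (HB_shift : forall j, B (j + amax)%nat <= KA * ((INR j + 1) * (INR j + 1))).
  { intros j. unfold B, KA. rewrite plus_INR. pose proof (pos_INR j). pose proof (pos_INR amax).
    rewrite Rmult_assoc. apply Rmult_le_compat_l; [auto | nra]. }
  assert (Hdom : forall f C, (forall j, Rabs (f j) <= C * ((INR j + 1) * (INR j + 1))) ->
    exists l, infinite_sum (fun j => pi j * f j) l).
  { intros f C Hf. apply (infinite_sum_dominated _ (fun j => C * (pi j * ((INR j + 1) * (INR j + 1))))
      (C * m2)); [|apply infinite_sum_scal; auto].
    intros j. rewrite Rabs_mult, (Rabs_right (pi j)) by (apply Rle_ge, stationary_nonneg).
    pose proof (stationary_nonneg j). specialize (Hf j). nra. }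
  destruct (Hdom psi K Hpsi) as [L1 HL1].
  destruct (Hdom (step_exp psi) KA) as [L2 HL2].
  { intros j. apply step_exp_bound. intros k Hk.
    eapply Rle_trans; [apply Hpsi|]. eapply Rle_trans; [apply (HB_mono k (j + amax)%nat Hk)|].
    apply HB_shift. }
  exists L1. split; auto.
  replace L1 with L2; auto. symmetry.
  apply (stationary_step_exp psi B); auto.
  assert (Hcv : Un_cv (fun i => KA * (pi i * ((INR i + 1) * (INR i + 1)))) 0).
  { rewrite <- (Rmult_0_r KA). apply CV_mult; [apply cv_eventually_const with 0%nat; auto|].
    eapply infinite_sum_cv0; eauto. }
  intros e He. destruct (Hcv e He) as [N HN]. exists N. intros n Hn. specialize (HN n Hn).
  unfold Rdist in *. rewrite Rminus_0_r in *. eapply Rle_lt_trans; [|exact HN].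
  pose proof (stationary_nonneg n).
  assert (0 <= B (n + amax)%nat) by (unfold B; apply Rmult_le_pos; [auto | apply Rle_0_sqr]).
  assert (0 <= KA) by (unfold KA; apply Rmult_le_pos; [auto | apply Rle_0_sqr]).
  assert (0 <= pi n * ((INR n + 1) * (INR n + 1))) by (apply Rmult_le_pos; [auto | apply Rle_0_sqr]).
  rewrite !Rabs_right by (apply Rle_ge, Rmult_le_pos; auto).
  specialize (HB_shift n). nra.
Qed.

Lemma stationary_mean_unused : infinite_sum (fun i => pi i * mean_unused i) eps.
Proof.
  destruct (stationary_step_exp_quadratic INR 1) as [L [HL1 HL2]]; [lra| |].
  { intros j. pose proof (pos_INR j). rewrite Rabs_right by lra. nra. }
  assert (H := infinite_sum_plus _ _ _ _ (infinite_sum_minus _ _ _ _ HL2 HL1)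
                 (infinite_sum_scal _ eps _ stationary_total)).
  rewrite Rminus_diag, Rplus_0_l, Rmult_1_r in H.
  eapply infinite_sum_ext; [|exact H]. intros i. cbv beta.
  rewrite step_exp_INR, Hdrift. ring.
Qed.

Lemma Eas_increment_quadratic alpha beta gamma :
  Eas (fun a s => alpha + beta * (INR a - INR s) + gamma * ((INR a - INR s) * (INR a - INR s)))
  = alpha - beta * eps + gamma * (pmf_var pa amax + pmf_var ps smax + eps * eps).
Proof. rewrite !Eas_plus, !Eas_scal, Eas_const, Eas_diff, Eas_diff_sqr, Hdrift. ring. Qed.

Section GeneratorExpansion.

Variables (G Gd : R -> R) (L : R).
Hypothesis HL : 0 <= L.
Hypothesis G_taylor : forall x y, Rabs (G y - G x - Gd x * (y - x)) <= L * ((y - x) * (y - x)).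
Hypothesis Gd_bound : forall x, Rabs (Gd x) <= 1.

(* With [d = (a - s) + u] the queue increment, [left_sum] moves by about
   [d g + eps gd d (d - 1) / 2]; all [u]-terms other than [g u] are [O(eps u)]. *)
Lemma left_sum_step_remainder i a s : (a <= amax)%nat -> (s <= smax)%nat ->
  Rabs (left_sum G eps (i + a - s) - left_sum G eps i
        - (G (eps * INR i) * (INR a - INR s)
           + eps * Gd (eps * INR i) / 2 * ((INR a - INR s) * (INR a - INR s))
           - eps * Gd (eps * INR i) / 2 * (INR a - INR s)
           + G (eps * INR i) * unused i a s))
  <= eps * ((2 * M + INR smax + 1) / 2) * unused i a s + L * (eps * eps) * (M * M * M).
Proof.
  intros Ha Hs.
  pose proof (unused_bounds i a s smax Hs) as Hu.
  pose proof (queue_increment_bounds i a s smax Hs) as Hd.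
  pose proof (left_sum_taylor G Gd L eps HL G_taylor i (i + a - s)) as HP.
  apply le_INR in Ha, Hs. pose proof (pos_INR a). pose proof (pos_INR s). pose proof (pos_INR amax).
  pose proof (Gd_bound (eps * INR i)) as Hgd.
  unfold unused in *.
  set (g := G (eps * INR i)) in *. set (gd := Gd (eps * INR i)) in *.
  set (x := INR a - INR s) in *. set (u := INR (i + a - s) - INR i - x) in *.
  replace (INR (i + a - s) - INR i) with (x + u) in HP, Hd by (unfold u; ring).
  set (R := left_sum G eps (i + a - s) - left_sum G eps i - (x + u) * g
            - eps * gd * ((x + u) * (x + u - 1) / 2)) in HP.
  replace (left_sum G eps (i + a - s) - left_sum G eps i
           - (g * x + eps * gd / 2 * (x * x) - eps * gd / 2 * x + g * u))
    with (R + (eps * gd / 2) * (u * (2 * x + u - 1))) by (unfold R; field).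
  assert (Hxu : Rabs (x + u) <= M) by (apply Rabs_le; unfold M; lra).
  assert (HR : Rabs R <= L * (eps * eps) * (M * M * M)).
  { eapply Rle_trans; [exact HP|]. apply Rmult_le_compat_l; [apply Rmult_le_pos; [lra | apply Rle_0_sqr]|].
    pose proof (Rabs_pos (x + u)).
    apply Rmult_le_compat; [nra | lra | apply Rmult_le_compat; lra | lra]. }
  assert (HC : Rabs (2 * x + u - 1) <= 2 * M + INR smax + 1) by (apply Rabs_le; unfold M, x in *; lra).
  assert (Hcoef : Rabs (eps * gd / 2) <= eps / 2).
  { unfold Rdiv. rewrite !Rabs_mult, (Rabs_right eps), (Rabs_right (/ 2)) by lra.
    pose proof (Rabs_pos gd). nra. }
  eapply Rle_trans; [apply Rabs_triang|]. rewrite Rplus_comm. apply Rplus_le_compat; auto.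
  rewrite !Rabs_mult, (Rabs_right u) by lra.
  pose proof (Rabs_pos (eps * gd / 2)). pose proof (Rabs_pos (2 * x + u - 1)).
  assert (Rabs (eps * gd / 2) * (u * Rabs (2 * x + u - 1)) <= eps / 2 * (u * (2 * M + INR smax + 1))).
  { apply Rmult_le_compat; auto; [apply Rmult_le_pos; lra | apply Rmult_le_compat_l; lra]. }
  lra.
Qed.

Variables (h : R -> R) (c : R).
Hypothesis G_stein : forall x, (pmf_var pa amax + pmf_var ps smax) / 2 * Gd x - G x = h x - c.

(* The first and second moments of [a - s] turn the Taylor expansion of [left_sum] into the
   Stein operator. *)
Lemma step_exp_left_sum i :
  Rabs (step_exp (left_sum G eps) i - left_sum G eps i - eps * (h (eps * INR i) - c)
        - G (eps * INR i) * mean_unused i)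
  <= eps * eps * (eps + 1) / 2 + eps * ((2 * M + INR smax + 1) / 2) * mean_unused i
     + L * (eps * eps) * (M * M * M).
Proof.
  set (g := G (eps * INR i)). set (gd := Gd (eps * INR i)).
  set (T := fun a s => left_sum G eps (i + a - s) - left_sum G eps i
        - (g * (INR a - INR s) + eps * gd / 2 * ((INR a - INR s) * (INR a - INR s))
           - eps * gd / 2 * (INR a - INR s) + g * unused i a s)).
  assert (HE : step_exp (left_sum G eps) i
    = left_sum G eps i - g * eps + eps * gd / 2 * ((pmf_var pa amax + pmf_var ps smax) + eps * eps)
      + eps * gd / 2 * eps + g * mean_unused i + Eas T).
  { unfold step_exp.
    rewrite (Eas_ext _ (fun a s => (left_sum G eps i + (g - eps * gd / 2) * (INR a - INR s)
        + eps * gd / 2 * ((INR a - INR s) * (INR a - INR s))) + (g * unused i a s + T a s)))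
      by (intros; unfold T; ring).
    rewrite Eas_plus, Eas_increment_quadratic, Eas_plus, Eas_scal.
    change (Eas (fun a s => T a s)) with (Eas T). change (Eas (unused i)) with (mean_unused i).
    ring. }
  rewrite HE, <- G_stein. fold g gd.
  replace (left_sum G eps i - g * eps + eps * gd / 2 * ((pmf_var pa amax + pmf_var ps smax) + eps * eps)
           + eps * gd / 2 * eps + g * mean_unused i + Eas T - left_sum G eps i
           - eps * ((pmf_var pa amax + pmf_var ps smax) / 2 * gd - g) - g * mean_unused i)
    with (gd * (eps * (eps * eps + eps) / 2) + Eas T) by field.
  assert (Hquad : Rabs (gd * (eps * (eps * eps + eps) / 2)) <= eps * eps * (eps + 1) / 2).
  { assert (0 <= eps * (eps * eps + eps) / 2) by (unfold Rdiv; apply Rmult_le_pos; nra).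
    rewrite Rabs_mult, (Rabs_right (eps * _ / 2)) by lra.
    replace (eps * eps * (eps + 1) / 2) with (1 * (eps * (eps * eps + eps) / 2)) by field.
    apply Rmult_le_compat_r; [lra | apply Gd_bound]. }
  assert (HT : Rabs (Eas T) <= eps * ((2 * M + INR smax + 1) / 2) * mean_unused i
                               + L * (eps * eps) * (M * M * M)).
  { eapply Rle_trans; [apply Eas_abs|].
    eapply Rle_trans; [apply Eas_le; intros a s Ha Hs; apply (left_sum_step_remainder i a s Ha Hs)|].
    rewrite Eas_plus, Eas_scal, Eas_const. change (Eas (unused i)) with (mean_unused i). lra. }
  eapply Rle_trans; [apply Rabs_triang|]. lra.
Qed.

End GeneratorExpansion.

(* [u] vanishes when [q >= smax], and [|G (eps q)| <= eps smax] when [q < smax]. *)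
Lemma stationary_G_unused G : (forall x, 0 <= x -> Rabs (G x) <= x) ->
  exists SG, infinite_sum (fun i => pi i * (G (eps * INR i) * mean_unused i)) SG
          /\ Rabs SG <= eps * INR smax * eps.
Proof.
  intros HG.
  assert (HGu : forall i, Rabs (pi i * (G (eps * INR i) * mean_unused i))
                          <= eps * INR smax * (pi i * mean_unused i)).
  { intros i. pose proof (stationary_nonneg i). pose proof (mean_unused_nonneg i).
    rewrite !Rabs_mult, (Rabs_right (pi i)), (Rabs_right (mean_unused i)) by lra.
    destruct (Nat.le_gt_cases smax i) as [Hi|Hi].
    - rewrite mean_unused_eq_0 by auto. lra.
    - apply lt_INR in Hi. pose proof (pos_INR i).
      assert (Rabs (G (eps * INR i)) <= eps * INR smax) by (eapply Rle_trans; [apply HG; nra | nra]).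
      pose proof (Rabs_pos (G (eps * INR i))).
      replace (eps * INR smax * (pi i * mean_unused i))
        with (pi i * (eps * INR smax * mean_unused i)) by ring.
      apply Rmult_le_compat_l; [lra|]. apply Rmult_le_compat_r; lra. }
  assert (HUs := infinite_sum_scal _ (eps * INR smax) _ stationary_mean_unused).
  destruct (infinite_sum_dominated _ _ _ HGu HUs) as [SG HSG].
  exists SG. split; [exact HSG | exact (infinite_sum_abs_le _ _ _ _ HSG HUs HGu)].
Qed.

(* Stationarity kills the drift of [left_sum G eps], which by [step_exp_left_sum] leaves
   [eps (E h(eps q) - c) + E[G(eps q) u] = O(eps^2)]. *)
Lemma stationary_stein_bound G Gd L h c l : 0 <= L ->
  (forall x y, Rabs (G y - G x - Gd x * (y - x)) <= L * ((y - x) * (y - x))) ->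
  (forall x, Rabs (Gd x) <= 1) ->
  (forall x, (pmf_var pa amax + pmf_var ps smax) / 2 * Gd x - G x = h x - c) ->
  (forall x, 0 <= x -> Rabs (G x) <= x) ->
  infinite_sum (fun n => pi n * h (eps * INR n)) l ->
  Rabs (l - c) <= eps * ((eps + 1) / 2 + L * (M * M * M) + (2 * M + INR smax + 1) / 2 + INR smax).
Proof.
  intros HL Ht Hgd Hstein HG Hl.
  set (Cu := (2 * M + INR smax + 1) / 2).
  set (Kst := eps * eps * (eps + 1) / 2 + L * (eps * eps) * (M * M * M)).
  set (Phi := left_sum G eps).
  destruct (stationary_step_exp_quadratic Phi eps) as [LP [HP1 HP2]]; [lra| |].
  { intros j. eapply Rle_trans; [apply left_sum_bound; auto; lra|].
    pose proof (pos_INR j). apply Rmult_le_compat_l; [lra | nra]. }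
  destruct (stationary_G_unused G HG) as [SG [HSG HSGb]].
  assert (Hsum : infinite_sum (fun i => pi i * (step_exp Phi i - Phi i - eps * (h (eps * INR i) - c)
                                                  - G (eps * INR i) * mean_unused i))
                   (LP - LP - (eps * l - eps * c * 1) - SG)).
  { assert (H := infinite_sum_minus _ _ _ _ (infinite_sum_minus _ _ _ _
      (infinite_sum_minus _ _ _ _ HP2 HP1) (infinite_sum_minus _ _ _ _ (infinite_sum_scal _ eps _ Hl)
      (infinite_sum_scal _ (eps * c) _ stationary_total))) HSG).
    eapply infinite_sum_ext; [|exact H]. intros i. cbv beta. ring. }
  assert (Hbound := infinite_sum_abs_le _ _ _ _ Hsum (infinite_sum_plus _ _ _ _
    (infinite_sum_scal _ Kst _ stationary_total) (infinite_sum_scal _ (eps * Cu) _ stationary_mean_unused))).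
  assert (Hfin : Rabs (LP - LP - (eps * l - eps * c * 1) - SG) <= Kst * 1 + eps * Cu * eps).
  { apply Hbound. intros i. pose proof (stationary_nonneg i).
    rewrite Rabs_mult, (Rabs_right (pi i)) by lra.
    replace (Kst * pi i + eps * Cu * (pi i * mean_unused i))
      with (pi i * (Kst + eps * Cu * mean_unused i)) by ring.
    apply Rmult_le_compat_l; [lra|].
    eapply Rle_trans; [apply (step_exp_left_sum G Gd L HL Ht Hgd h c Hstein i)|].
    unfold Kst, Cu. lra. }
  assert (Heps_abs : eps * Rabs (l - c) <= Kst + eps * Cu * eps + eps * INR smax * eps).
  { rewrite <- (Rabs_right eps) at 1 by lra. rewrite <- Rabs_mult.
    replace (eps * (l - c)) with (- (LP - LP - (eps * l - eps * c * 1) - SG) - SG) by ring.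
    eapply Rle_trans; [apply Rabs_triang|]. rewrite !Rabs_Ropp. lra. }
  apply (Rmult_le_reg_l eps); [lra|].
  eapply Rle_trans; [exact Heps_abs|]. unfold Kst, Cu. apply Req_le. field.
Qed.

Lemma stationary_exp_distance h th : Lip1 h -> 0 < pmf_var pa amax + pmf_var ps smax ->
  th = 2 / (pmf_var pa amax + pmf_var ps smax) ->
  exists l1 l2,
    infinite_sum (fun n => pi n * h (eps * INR n)) l1 /\
    improper_int0 (fun x => h x * exp_density th x) l2 /\
    Rabs (l1 - l2)
    <= eps * ((eps + 1) / 2 + 2 * th * (M * M * M) + (2 * M + INR smax + 1) / 2 + INR smax).
Proof.
  intros Hh Hsig Hth_def.
  assert (Hth : 0 < th) by (subst th; apply Rdiv_lt_0_compat; lra).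
  destruct (exp_int_limit_exists h th Hh Hth) as [c Hc].
  destruct (stationary_step_exp_quadratic (fun n => h (eps * INR n)) (Rabs (h 0) + eps))
    as [l [Hl _]].
  { pose proof (Rabs_pos (h 0)). lra. }
  { intros n. pose proof (pos_INR n). pose proof (Rabs_pos (h 0)).
    eapply Rle_trans; [apply Lip1_growth; auto; nra | nra]. }
  exists l, c. split; [exact Hl|]. split; [apply improper_int0_exp_int_limit; auto|].
  apply (stationary_stein_bound (stein_exp h th c) (stein_exp_deriv h th c) (2 * th) h c l); auto.
  - lra.
  - intros x y. apply stein_exp_taylor; auto.
  - intros x. apply stein_exp_deriv_bound; auto.
  - intros x. rewrite <- (stein_exp_equation h th c x Hth), Hth_def. field. lra.
  - intros x Hx. apply stein_exp_abs_le; auto.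
Qed.

End Stationary.

End Queue.

Theorem theorem1
  (ps : nat -> R) (pa : R -> nat -> R) (Amax Smax : nat) (mu c0 : R)
  (Hps : bounded_pmf ps Smax) (Hmu : pmf_mean ps Smax = mu) (Hmu0 : 0 < mu)
  (Hpa : forall eps, 0 < eps < mu -> bounded_pmf (pa eps) Amax)
  (Hmean : forall eps, 0 < eps < mu -> pmf_mean (pa eps) Amax = mu - eps)
  (Hc0 : 0 < c0)
  (Hvar : forall eps, 0 < eps < mu ->
     pmf_var (pa eps) Amax + pmf_var ps Smax >= c0) :
  exists K : R,
    forall eps, 0 < eps < mu ->
    forall pi : nat -> R, stationary (pa eps) Amax ps Smax pi ->
    let theta := 2 / (pmf_var (pa eps) Amax + pmf_var ps Smax) in
    forall h : R -> R, Lip1 h ->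
      exists l1 l2 : R,
        infinite_sum (fun n => pi n * h (eps * INR n)) l1 /\
        improper_int0 (fun x => h x * exp_density theta x) l2 /\
        Rabs (l1 - l2) <= K * eps.
Proof.
  set (M := INR Amax + INR Smax).
  exists ((mu + 1) / 2 + 4 / c0 * (M * M * M) + (2 * M + INR Smax + 1) / 2 + INR Smax).
  intros eps Heps pi Hpi theta h Hh.
  specialize (Hpa eps Heps). specialize (Hvar eps Heps).
  assert (Hdrift : pmf_mean (pa eps) Amax - pmf_mean ps Smax = - eps)
    by (rewrite Hmean, Hmu by auto; ring).
  assert (Hth_c0 : 2 * theta <= 4 / c0).
  { unfold theta, Rdiv. rewrite <- Rmult_assoc.
    apply Rmult_le_compat_l; [lra | apply Rinv_le_contravar; lra]. }
  destruct (stationary_exp_distance _ _ _ _ Hpa Hps pi Hpi eps ltac:(lra) Hdrift h theta Hh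
              ltac:(lra) eq_refl) as [l1 [l2 [Hl1 [Hl2 Hdist]]]].
  exists l1, l2. split; [exact Hl1|]. split; [exact Hl2|].
  eapply Rle_trans; [exact Hdist|].
  fold M. rewrite (Rmult_comm _ eps). apply Rmult_le_compat_l; [lra|].
  assert (HM3 : 0 <= M * M * M)
    by (unfold M; pose proof (pos_INR Amax); pose proof (pos_INR Smax);
        apply Rmult_le_pos; [apply Rle_0_sqr | lra]).
  pose proof (Rmult_le_compat_r _ _ _ HM3 Hth_c0). lra.
Qed.
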